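(* Let $\mathcal{P}$ be a polyomino with toric ideal $J_{\mathcal{P}}\subset S$, and let $f=f^+-f^-\in J_{\mathcal{P}}$ be a binomial of degree $\ge 3$, with $V_+=\{v\in V(\mathcal{P}): x_v\mid f^+\}$ and $V_-=\{v\in V(\mathcal{P}): x_v\mid f^-\}$. If there exist $p,q\in V_+$ and $r\in V_-$ such that $p,q$ are the diagonal (resp. anti-diagonal) corners of an inner interval of $\mathcal{P}$ and $r$ is one of the anti-diagonal (resp. diagonal) corners of that interval, then $f$ is redundant in $J_{\mathcal{P}}$.
   Context: For $a\in\mathbb{N}^2$ the cell $[a,a+(1,1)]$ has vertices $a,a+(1,0),a+(0,1),a+(1,1)$ and four edges. A polyomino $\mathcal{P}$ is a finite nonempty set of cells such that any two cells are joined by a sequence of cells of $\mathcal{P}$, consecutive ones sharing an edge. $V(\mathcal{P})$ is the union of vertex sets of its cells; $S=\mathbb{K}[x_v\mid v\in V(\mathcal{P})]$, $\mathbb{K}$ a field, standard graded. For $a=(i,j)$, $b=(k,\ell)$, $i<k$, $j<\ell$, $[a,b]$ has diagonal corners $a,b$ and anti-diagonal corners $(i,\ell),(k,j)$; it is an inner interval if all its cells belong to $\mathcal{P}$. Toric ideal: a hole of $\mathcal{P}$ is a finite nonempty set of cells not in $\mathcal{P}$, connected through paths of its own cells (consecutive cells sharing an edge), maximal with these properties. Order $\mathbb{N}^2$ by $(a_1,a_2)<(b_1,b_2)$ iff $a_1<b_1$ or ($a_1=b_1$ and $a_2<b_2$); the lower left corner of a hole is its minimal vertex. Let $\mathcal{H}_1,\dots,\mathcal{H}_r$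 be the holes with lower left corners $(i_k,j_k)$ and $\mathcal{F}_k=\{(i,j)\in V(\mathcal{P}): i\le i_k, j\le j_k\}$. A horizontal edge interval is a set $\{(t,j):i\le t\le k\}$ such that each $\{(t,j),(t+1,j)\}$, $i\le t<k$, is an edge of a cell of $\mathcal{P}$; maximal if not strictly contained in another; vertical ones analogously. Each $a\in V(\mathcal{P})$ lies in a unique maximal horizontal edge interval $H(a)$ and unique maximal vertical one $V(a)$. With variables $h_H$, $v_V$ (one per maximal horizontal/vertical edge interval) and $w_1,\dots,w_r$, define $\varphi(x_a)=h_{H(a)}v_{V(a)}\prod_{k:a\in\mathcal{F}_k}w_k$; $J_{\mathcal{P}}=\ker\varphi$. A binomial $f$ in a binomial ideal $J$ is redundant if it can be expressed as a linear combination (with polynomial coefficients) of binomials in $J$ of lower degree. *)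

From HB Require Import structures.
From mathcomp Require Import all_boot all_order all_algebra.
From mathcomp Require Import finmap.
From mathcomp.multinomials Require Import monalg.

Set Implicit Arguments.
Unset Strict Implicit.
Unset Printing Implicit Defensive.

Import GRing.Theory.
Local Open Scope fset_scope.
Local Open Scope ring_scope.

(* A cell is identified with its lower left corner a in N^2. *)
Definition cell := (nat * nat)%type.

Definition cell_verts (a : cell) : {fset (nat * nat)} :=
  [fset a; (a.1.+1, a.2); (a.1, a.2.+1); (a.1.+1, a.2.+1)].

Definition Vset (P : {fset cell}) : {fset (nat * nat)} :=
  \bigcup_(a <- P) cell_verts a.

Definition adj (a b : cell) : bool :=
  ((a.1 == b.1) && ((a.2.+1 == b.2) || (b.2.+1 == a.2))) ||
  ((a.2 == b.2) && ((a.1.+1 == b.1) || (b.1.+1 == a.1))).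

Definition cells_connected (C : {fset cell}) : Prop :=
  forall a b, a \in C -> b \in C ->
    exists s : seq cell, [/\ path adj a s, last a s = b & all (mem C) s].

Definition polyomino (P : {fset cell}) : Prop :=
  P != fset0 /\ cells_connected P.

Definition hole_like (P C : {fset cell}) : Prop :=
  [/\ C != fset0, (forall c, c \in C -> c \notin P) & cells_connected C].

Definition is_hole (P C : {fset cell}) : Prop :=
  hole_like P C /\
  (forall D : {fset cell}, hole_like P D -> C `<=` D -> D = C).

Definition hole_list (P : {fset cell}) (hs : seq {fset cell}) : Prop :=
  uniq hs /\ (forall C, C \in hs <-> is_hole P C).

Definition lexlt (a b : nat * nat) : bool :=
  (a.1 < b.1)%N || ((a.1 == b.1) && (a.2 < b.2)%N).
Definition lexmin (a b : nat * nat) := if lexlt b a then b else a.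

Definition llc (C : {fset cell}) : nat * nat :=
  let l := enum_fset (Vset C) in foldr lexmin (head (0%N, 0%N) l) l.

Definition inF (c a : nat * nat) : bool := (a.1 <= c.1)%N && (a.2 <= c.2)%N.

(* {(t,j),(t+1,j)} is an edge of a cell of P *)
Definition hedge (P : {fset cell}) (t j : nat) : bool :=
  ((t, j) \in P) || ((0 < j)%N && ((t, j.-1) \in P)).
(* {(i,t),(i,t+1)} is an edge of a cell of P *)
Definition vedge (P : {fset cell}) (i t : nat) : bool :=
  ((i, t) \in P) || ((0 < i)%N && ((i.-1, t) \in P)).

(* (i,k,j) encodes the set {(t,j) : i <= t <= k} *)
Definition hset (I : nat * nat * nat) : pred (nat * nat) :=
  fun v => (v.2 == I.2) && (I.1.1 <= v.1 <= I.1.2)%N.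
Definition is_hint (P : {fset cell}) (I : nat * nat * nat) : Prop :=
  (I.1.1 <= I.1.2)%N /\ forall t, (I.1.1 <= t < I.1.2)%N -> hedge P t I.2.
Definition is_maxhint (P : {fset cell}) (I : nat * nat * nat) : Prop :=
  is_hint P I /\
  forall I', is_hint P I' -> {subset hset I <= hset I'} -> hset I' =1 hset I.

(* (i,j,l) encodes the set {(i,t) : j <= t <= l} *)
Definition vset (I : nat * nat * nat) : pred (nat * nat) :=
  fun v => (v.1 == I.1.1) && (I.1.2 <= v.2 <= I.2)%N.
Definition is_vint (P : {fset cell}) (I : nat * nat * nat) : Prop :=
  (I.1.2 <= I.2)%N /\ forall t, (I.1.2 <= t < I.2)%N -> vedge P I.1.1 t.
Definition is_maxvint (P : {fset cell}) (I : nat * nat * nat) : Prop :=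
  is_vint P I /\
  forall I', is_vint P I' -> {subset vset I <= vset I'} -> vset I' =1 vset I.

(* variables of the target ring: h_H, v_V, w_k *)
Definition tvar := ((nat * nat * nat) + (nat * nat * nat) + nat)%type.

Notation Sring K P := {malg K[{cmonom (Vset P)}]}.
Notation Tring K := {malg K[{cmonom tvar}]}.

Definition phi_var (K : fieldType) (Hf Vf : nat * nat -> nat * nat * nat)
  (hs : seq {fset cell}) (a : nat * nat) : Tring K :=
  << ucm (inl (inl (Hf a)) : tvar) >> * << ucm (inl (inr (Vf a)) : tvar) >> *
  \prod_(k < size hs | inF (llc (nth fset0 hs k)) a) << ucm (inr (k : nat) : tvar) >>.

Definition phi (K : fieldType) (P : {fset cell}) (Hf Vf : nat * nat -> nat * nat * nat)
  (hs : seq {fset cell}) (g : Sring K P) : Tring K :=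
  \sum_(m <- msupp g)
     g@_m *: \prod_(v : Vset P) (@phi_var K Hf Vf hs (val v)) ^+ (m v).

Definition inJ (K : fieldType) (P : {fset cell}) (Hf Vf : nat * nat -> nat * nat * nat)
  (hs : seq {fset cell}) (g : Sring K P) : bool := @phi K P Hf Vf hs g == 0.

Definition binom (K : fieldType) (I : choiceType) (u w : {cmonom I}) : {malg K[{cmonom I}]} :=
  << u >> - << w >>.
Definition bdeg (I : choiceType) (u w : {cmonom I}) : nat := maxn (mdeg u) (mdeg w).

Definition redundant (K : fieldType) (P : {fset cell}) (Hf Vf : nat * nat -> nat * nat * nat)
  (hs : seq {fset cell}) (f : Sring K P) (d : nat) : Prop :=
  exists s : seq (Sring K P * ({cmonom (Vset P)} * {cmonom (Vset P)})),
    (forall t, t \in s -> @inJ K P Hf Vf hs (@binom K _ t.2.1 t.2.2) /\ (bdeg t.2.1 t.2.2 < d)%N) /\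
    f = \sum_(t <- s) t.1 * @binom K _ t.2.1 t.2.2.

Definition inner_interval (P : {fset cell}) (a b : nat * nat) : Prop :=
  [/\ (a.1 < b.1)%N, (a.2 < b.2)%N &
    forall x y, (a.1 <= x < b.1)%N -> (a.2 <= y < b.2)%N -> (x, y) \in P].

From HB Require Import structures.
From mathcomp Require Import all_boot all_order all_algebra.
From mathcomp Require Import finmap.
From mathcomp.multinomials Require Import monalg.
From mathcomp Require Import zify.

Set Implicit Arguments.
Unset Strict Implicit.
Unset Printing Implicit Defensive.

Import GRing.Theory.
Local Open Scope fset_scope.
Local Open Scope ring_scope.

(* Since phi maps monomials to monomials, a binomial u - w lies in J_P iff
   phi(u) = phi(w).  Let [a, b] be an inner interval with anti-diagonal corners
   c = (a.1, b.2) and d = (b.1, a.2).  The four sides of [a, b] are edge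
   intervals, and the maximal edge interval through a point contains every edge
   interval through it; so a, d and b, c have the same H, and a, c and b, d the
   same V.  The lower left corner of a hole is a cell outside P, hence not a cell
   of [a, b], which forces every w_k to occur equally often in phi(x_a x_b) and
   phi(x_c x_d).  Hence x_a x_b - x_c x_d is in J_P.  Let s be the corner paired
   with r; writing f^+ = x_p x_q u and f^- = x_r w,
     f = u (x_p x_q - x_r x_s) + x_r (x_s u - w),
   where both binomials on the right lie in J_P and have degree < deg f (the
   first one has degree 2 < 3). *)

Section MaximalIntervals.

Variables (T X : Type) (ok : T -> Prop) (pts : T -> pred X).

Hypothesis ok_join : forall I J x, ok I -> ok J -> pts I x -> pts J x ->
  exists2 K, ok K & {subset pts I <= pts K} /\ {subset pts J <= pts K}.
Hypothesis pts_inj : forall I J, ok I -> ok J -> pts I =1 pts J -> I = J.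

(* [is_maxhint P] and [is_maxvint P] unfold to instances of [maximal]. *)
Definition maximal I :=
  ok I /\ forall J, ok J -> {subset pts I <= pts J} -> pts J =1 pts I.

Lemma maximal_sub I J x : maximal I -> ok J -> pts I x -> pts J x ->
  {subset pts J <= pts I}.
Proof.
move=> [okI maxI] okJ xI xJ y /= yJ.
have [K okK [IK JK]] := ok_join okI okJ xI xJ.
by rewrite -[y \in pts I]/(pts I y) -(maxI K okK IK y); apply: JK.
Qed.

Lemma maximal_uniq I J x : maximal I -> maximal J -> pts I x -> pts J x -> I = J.
Proof.
move=> mI mJ xI xJ; apply: pts_inj mI.1 mJ.1 _ => y.
by apply/idP/idP; [exact: (maximal_sub mJ mI.1 xJ xI) | exact: (maximal_sub mI mJ.1 xI xJ)].
Qed.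

Lemma maximal_fun_eq (F : X -> T) I x y :
  maximal (F x) -> pts (F x) x -> maximal (F y) -> pts (F y) y ->
  ok I -> pts I x -> pts I y -> F x = F y.
Proof.
move=> mx xx my yy okI xI yI.
apply: (maximal_uniq mx my _ yy).
by have := maximal_sub mx okI xx xI yI.
Qed.

End MaximalIntervals.

Lemma edge_run_join (e : pred nat) lo1 hi1 lo2 hi2 x :
  (forall t, lo1 <= t < hi1 -> e t)%N -> (forall t, lo2 <= t < hi2 -> e t)%N ->
  (lo1 <= x <= hi1)%N -> (lo2 <= x <= hi2)%N ->
  forall t, (minn lo1 lo2 <= t < maxn hi1 hi2)%N -> e t.
Proof.
move=> e1 e2 x1 x2 t ht.
case: (ltnP t x) => tx.
- by case: (leqP lo1 t) => ?; [apply: e1 | apply: e2]; lia.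
- by case: (ltnP t hi1) => ?; [apply: e1 | apply: e2]; lia.
Qed.

Lemma hint_join P I J x : is_hint P I -> is_hint P J -> hset I x -> hset J x ->
  exists2 K, is_hint P K & {subset hset I <= hset K} /\ {subset hset J <= hset K}.
Proof.
case: I J => [[i1 i2] j] [[j1 j2] j'] [/= le1 e1] [/= le2 e2].
move=> /andP[/= /eqP xj x1] /andP[/= /eqP xj' x2]; subst j j'.
exists (minn i1 j1, maxn i2 j2, x.2).
  by split=> /=; [lia | exact: (edge_run_join (e := hedge P ^~ x.2)) x1 x2].
by split=> y /andP[/= yx yI]; apply/andP; split=> //=; lia.
Qed.

Lemma hset_inj P I J : is_hint P I -> is_hint P J -> hset I =1 hset J -> I = J.
Proof.
case: I J => [[i1 i2] j] [[j1 j2] j'] [/= le1 _] [/= le2 _] eIJ.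
have := eIJ (i1, j); have := eIJ (i2, j); have := eIJ (j1, j'); have := eIJ (j2, j').
rewrite /hset /= !eqxx !leqnn le1 le2 /=.
move=> /andP[_ h1] /andP[_ h2] /esym/andP[_ h3] /esym/andP[/eqP <- h4].
by congr (_, _, _); lia.
Qed.

Lemma vint_join P I J x : is_vint P I -> is_vint P J -> vset I x -> vset J x ->
  exists2 K, is_vint P K & {subset vset I <= vset K} /\ {subset vset J <= vset K}.
Proof.
case: I J => [[i i1] i2] [[i' j1] j2] [/= le1 e1] [/= le2 e2].
move=> /andP[/= /eqP xi x1] /andP[/= /eqP xi' x2]; subst i i'.
exists (x.1, minn i1 j1, maxn i2 j2).
  by split=> /=; [lia | exact: (edge_run_join (e := vedge P x.1)) x1 x2].
by split=> y /andP[/= yx yI]; apply/andP; split=> //=; lia.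
Qed.

Lemma vset_inj P I J : is_vint P I -> is_vint P J -> vset I =1 vset J -> I = J.
Proof.
case: I J => [[i i1] i2] [[i' j1] j2] [/= le1 _] [/= le2 _] eIJ.
have := eIJ (i, i1); have := eIJ (i, i2); have := eIJ (i', j1); have := eIJ (i', j2).
rewrite /vset /= !eqxx !leqnn le1 le2 /=.
move=> /andP[_ h1] /andP[_ h2] /esym/andP[_ h3] /esym/andP[/eqP <- h4].
by congr (_, _, _); lia.
Qed.

Lemma foldr_lexminP (l : seq (nat * nat)) x0 :
  foldr lexmin x0 l \in x0 :: l /\ forall z, z \in l -> ~~ lexlt z (foldr lexmin x0 l).
Proof.
elim: l => [|y l [IHin IHmin]] /=; first by rewrite mem_seq1.
set m := foldr lexmin x0 l in IHin IHmin *.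
rewrite /lexmin; case: ifP => lt_m.
- split; first by move: IHin; rewrite !inE => /orP[] ->; rewrite ?orbT.
  by move=> z; rewrite inE => /orP[/eqP ->|/IHmin]; move: lt_m; rewrite /lexlt; lia.
- split; first by rewrite !inE eqxx orbT.
  by move=> z; rewrite inE => /orP[/eqP ->|/IHmin]; move: lt_m; rewrite /lexlt; lia.
Qed.

Lemma in_Vset (P : {fset cell}) x v : x \in P -> v \in cell_verts x -> v \in Vset P.
Proof. by move=> xP vx; apply/bigfcupP; exists x; rewrite ?xP. Qed.

Lemma llc_in (C : {fset cell}) : C != fset0 -> llc C \in C.
Proof.
case/fset0Pn=> x xC.
have xV : x \in Vset C by apply: (in_Vset xC); rewrite !inE eqxx.
rewrite /llc; set l := enum_fset (Vset C).
have [m_in m_min] := foldr_lexminP l (head (0%N, 0%N) l).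
set m := foldr _ _ _ in m_in m_min *.
have /bigfcupP[y /andP[yC _] my] : m \in Vset C.
  move: m_in; rewrite inE => /orP[/eqP ->|//].
  have xl : x \in l := xV.
  by rewrite -nth0 mem_nth // lt0n size_eq0; apply: contraTneq xl => ->.
(* [m] is a corner of the cell [y], and [y] is itself a vertex, so [m = y] *)
have /m_min : y \in Vset C by apply: (in_Vset yC); rewrite !inE eqxx.
move: my; rewrite !inE /lexlt => /orP[/orP[/orP[]|]|] /eqP -> //=; lia.
Qed.

Lemma hole_llc_notin P C : is_hole P C -> llc C \notin P.
Proof. by case=> -[C0 CP _] _; exact/CP/llc_in. Qed.

Lemma inner_interval_corners P a b : inner_interval P a b ->
  [/\ a \in Vset P, b \in Vset P, (a.1, b.2) \in Vset P & (b.1, a.2) \in Vset P].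
Proof.
case: a b => [a1 a2] [b1 b2] [/= lt1 lt2 inP].
have cell_in x y : (a1 <= x < b1)%N -> (a2 <= y < b2)%N -> (x, y) \in P by apply: inP.
split.
- by apply: (in_Vset (cell_in a1 a2 _ _)); rewrite ?inE ?eqxx //; lia.
- apply: (in_Vset (cell_in b1.-1 b2.-1 _ _)); try lia.
  by rewrite !inE !xpair_eqE /=; lia.
- apply: (in_Vset (cell_in a1 b2.-1 _ _)); try lia.
  by rewrite !inE !xpair_eqE /=; lia.
- apply: (in_Vset (cell_in b1.-1 a2 _ _)); try lia.
  by rewrite !inE !xpair_eqE /=; lia.
Qed.

Lemma inner_interval_neq P a b : inner_interval P a b -> a != b /\ (a.1, b.2) != (b.1, a.2).
Proof.
by case=> lt1 _ _; split; [apply: contraTneq lt1 => -> | apply: contraTneq lt1 => -[->]];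
  rewrite ltnn.
Qed.

Lemma inF_inner_corners P a b c : inner_interval P a b -> c \notin P ->
  (inF c a + inF c b = inF c (a.1, b.2) + inF c (b.1, a.2))%N.
Proof.
case: a b c => [a1 a2] [b1 b2] [c1 c2] [/= lt1 lt2 inP] cP.
have : ~ ((a1 <= c1 < b1) /\ (a2 <= c2 < b2))%N.
  by case=> c1_in c2_in; move: cP; rewrite inP.
rewrite /inF /=; lia.
Qed.

Lemma cm_prod (I : choiceType) (T : Type) (r : seq T) (Pr : pred T)
    (F : T -> {cmonom I}) i :
  (\big[mmul/mone]_(t <- r | Pr t) F t) i = (\sum_(t <- r | Pr t) F t i)%N.
Proof. by apply: (big_morph (fun m : {cmonom I} => m i)) => [m n|]; rewrite ?cmM ?cm1. Qed.

Lemma mmulI (I : choiceType) (a : {cmonom I}) : injective (mmul a).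
Proof. by move=> m n /eqP/cmP amn; apply/eqP/cmP => i; have := amn i; rewrite !cmM; lia. Qed.

Lemma mmul_divcm (I : choiceType) (m n : {cmonom I}) :
  (forall i, m i <= n i)%N -> mmul m (divcm n m) = n.
Proof. by move=> mn; apply/eqP/cmP => i; rewrite cmM divcmE subnKC. Qed.

Lemma ucmM_le (I : choiceType) (m : {cmonom I}) (p q : I) :
  p != q -> (0 < m p)%N -> (0 < m q)%N -> forall i, (mmul (ucm p) (ucm q) i <= m i)%N.
Proof.
move=> pq mp mq i; rewrite cmM !cmU.
case: (eqVneq p i) => [<-|_]; first by rewrite eq_sym (negbTE pq).
by case: eqP => [<-|].
Qed.

Lemma malgUM (R : ringType) (I : choiceType) (m n : {cmonom I}) :
  << m >> * << n >> = << mmul m n >> :> {malg R[{cmonom I}]}.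
Proof. by rewrite malgM_def fgmulUU mulr1. Qed.

Lemma malgU_inj (R : ringType) (I : choiceType) (m n : {cmonom I}) :
  << m >> = << n >> :> {malg R[{cmonom I}]} -> m = n.
Proof.
move=> mn; have := mcoeffU1 R m n; rewrite mn mcoeffU1 eqxx.
by case: (eqVneq m n) => [//|_ /eqP]; rewrite oner_eq0.
Qed.

Lemma malgU_prod (R : comRingType) (I : choiceType) (T : Type) (r : seq T)
    (Pr : pred T) (F : T -> {cmonom I}) :
  << \big[mmul/mone]_(t <- r | Pr t) F t >> =
  \prod_(t <- r | Pr t) << F t >> :> {malg R[{cmonom I}]}.
Proof.
by apply: (big_morph (fun m => << m >>)) => [m n|]; rewrite ?malgUM ?mpolyC1E.
Qed.

Lemma mmap_malgCU (R : ringType) (I J : choiceType)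
    (h : {cmonom I} -> {malg R[{cmonom J}]}) (m : {cmonom I}) :
  mmap (@malgC _ _) h << m >> = h m.
Proof. by rewrite mmapU /= mpolyC1E mul1r. Qed.

Lemma mmap_malgCB (R : ringType) (I J : choiceType)
    (h : {cmonom I} -> {malg R[{cmonom J}]}) (m n : {cmonom I}) :
  mmap (@malgC _ _) h (<< m >> - << n >>) = h m - h n.
Proof. by rewrite -(mmap_malgCU h m) -(mmap_malgCU h n); exact: mmapB. Qed.

Lemma binomMl (K : fieldType) (I : choiceType) (a b c : {cmonom I}) :
  << a >> * binom K b c = binom K (mmul a b) (mmul a c).
Proof. by rewrite /binom -(malgUM K a b) -(malgUM K a c); exact: mulrBr. Qed.

Lemma binom_telescope (K : fieldType) (I : choiceType) (a b c d e f : {cmonom I}) :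
  mmul b e = mmul c f ->
  binom K (mmul a b) (mmul c d) = << b >> * binom K a e + << c >> * binom K f d.
Proof.
move=> bcef.
transitivity (binom K (mmul b a) (mmul b e) + binom K (mmul c f) (mmul c d)).
  by rewrite /binom (mulmC a b) bcef subrKA.
by congr (_ + _); apply/esym/binomMl.
Qed.

Definition holem (hs : seq {fset cell}) (a : nat * nat) : {cmonom tvar} :=
  \big[mmul/mone]_(k < size hs | inF (llc (nth fset0 hs k)) a) ucm (inr (k : nat) : tvar).

Definition phi_varm (Hf Vf : nat * nat -> nat * nat * nat) (hs : seq {fset cell})
    (a : nat * nat) : {cmonom tvar} :=
  mmul (mmul (ucm (inl (inl (Hf a)) : tvar)) (ucm (inl (inr (Vf a)) : tvar))) (holem hs a).

Definition phim (P : {fset cell}) (Hf Vf : nat * nat -> nat * nat * nat)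
    (hs : seq {fset cell}) (m : {cmonom (Vset P)}) : {cmonom tvar} :=
  \big[mmul/mone]_(v : Vset P) \big[mmul/mone]_(i < m v) phi_varm Hf Vf hs (val v).

Section MonomialImage.

Variables (K : fieldType) (P : {fset cell}) (Hf Vf : nat * nat -> nat * nat * nat).
Variable (hs : seq {fset cell}).

Local Notation phim := (@phim P Hf Vf hs).

Lemma phimM m n : phim (mmul m n) = mmul (phim m) (phim n).
Proof. by rewrite /phim -big_split; apply: eq_bigr => v _; rewrite cmM big_split_ord. Qed.

Lemma phimU v : phim (ucm v) = phi_varm Hf Vf hs (val v).
Proof.
rewrite /phim (bigD1 v) //= cmUU big_ord1 big1 ?mulm1 // => w /negbTE wv.
by rewrite cmU eq_sym wv big_ord0.
Qed.

Lemma phi_varE a : phi_var K Hf Vf hs a = << phi_varm Hf Vf hs a >>.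
Proof. by rewrite /phi_varm -!malgUM malgU_prod. Qed.

Lemma phiE (g : Sring K P) :
  phi Hf Vf hs g = mmap (@malgC _ _) (fun m => << phim m >>) g.
Proof.
apply: eq_bigr => m _; rewrite mul_malgC; congr (_ *: _).
rewrite malgU_prod; apply: eq_bigr => v _.
by rewrite malgU_prod prodr_const card_ord phi_varE.
Qed.

Lemma inJ_binomP (m n : {cmonom (Vset P)}) :
  inJ Hf Vf hs (binom K m n) <-> phim m = phim n.
Proof.
rewrite /inJ phiE /binom mmap_malgCB subr_eq0.
by split=> [/eqP/malgU_inj | ->].
Qed.

Lemma binom_redundant (fp fm : {cmonom (Vset P)}) (p q r s : Vset P) :
  p != q -> (0 < fp p)%N -> (0 < fp q)%N -> (0 < fm r)%N ->
  mmul (phi_varm Hf Vf hs (val p)) (phi_varm Hf Vf hs (val q)) =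
    mmul (phi_varm Hf Vf hs (val r)) (phi_varm Hf Vf hs (val s)) ->
  inJ Hf Vf hs (binom K fp fm) -> (3 <= bdeg fp fm)%N ->
  redundant Hf Vf hs (binom K fp fm) (bdeg fp fm).
Proof.
move=> pq fp_p fp_q fm_r Epq fJ fdeg.
set x_pq := mmul (ucm p) (ucm q); set x_rs := mmul (ucm r) (ucm s).
have fpE : fp = mmul x_pq (divcm fp x_pq) by rewrite mmul_divcm //; exact: ucmM_le.
have fmE : fm = mmul (ucm r) (divcm fm (ucm r)).
  by rewrite mmul_divcm // => i; rewrite cmU; case: eqP => [<-|].
move: (divcm fp x_pq) (divcm fm (ucm r)) fpE fmE => u w fpE fmE.
have pq_rsJ : phim x_pq = phim x_rs by rewrite !phimM !phimU.
have su_wJ : phim (mmul (ucm s) u) = phim w.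
  apply: (@mmulI _ (phi_varm Hf Vf hs (val r))).
  move/inJ_binomP: fJ; rewrite fpE fmE phimM pq_rsJ !phimM !phimU.
  by rewrite mulmA.
exists [:: (<< u >>, (x_pq, x_rs)); (<< ucm r >>, (mmul (ucm s) u, w))]; split.
- move=> t; rewrite !inE => /orP[] /eqP -> /=; split; try exact/inJ_binomP.
  + by move: fdeg; rewrite /bdeg !mdegM !mdegU.
  + by move: fdeg; rewrite /bdeg fpE fmE !mdegM !mdegU; lia.
- rewrite big_cons big_seq1 fpE fmE /=.
  apply: binom_telescope.
  by rewrite mulmC -mulmA.
Qed.

End MonomialImage.

Lemma holem_corners P hs a b : hole_list P hs -> inner_interval P a b ->
  mmul (holem hs a) (holem hs b) = mmul (holem hs (a.1, b.2)) (holem hs (b.1, a.2)).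
Proof.
move=> [_ holesP] ab; apply/eqP/cmP => i.
rewrite !cmM !cm_prod !(big_mkcond (fun t => inF _ _)) -!big_split; apply: eq_bigr => k _ /=.
have /hole_llc_notin : is_hole P (nth fset0 hs k) by apply/holesP/mem_nth.
move/(inF_inner_corners ab); set c := llc _.
by case: (inF c a) (inF c b) (inF c (a.1, b.2)) (inF c (b.1, a.2)) => [] [] [] [];
  rewrite /= ?addn0 ?add0n //; lia.
Qed.

Definition corner_pair (a b x y : nat * nat) : Prop := x = a /\ y = b \/ x = b /\ y = a.

Lemma corner_pair_neq a b x y : a != b -> corner_pair a b x y -> x != y.
Proof. by move=> ab [[-> ->]|[-> ->]]; rewrite // eq_sym. Qed.

Lemma corner_pair_complete (A : {fset (nat * nat)}) a b (r : A) :
  a \in A -> b \in A -> val r = a \/ val r = b -> exists s : A, corner_pair a b (val r) (val s).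
Proof. by move=> aA bA [] ->; [exists [` bA]; left | exists [` aA]; right]. Qed.

Section InnerIntervalImages.

Variables (P : {fset cell}) (hs : seq {fset cell}) (Hf Vf : nat * nat -> nat * nat * nat).
Hypothesis hhs : hole_list P hs.
Hypothesis hHf : forall a, a \in Vset P -> is_maxhint P (Hf a) /\ hset (Hf a) a.
Hypothesis hVf : forall a, a \in Vset P -> is_maxvint P (Vf a) /\ vset (Vf a) a.

Local Notation G a := (phi_varm Hf Vf hs a).

Lemma Hf_eq I x y : x \in Vset P -> y \in Vset P ->
  is_hint P I -> hset I x -> hset I y -> Hf x = Hf y.
Proof.
move=> /hHf[mx xx] /hHf[my yy].
exact: (maximal_fun_eq (@hint_join P) (@hset_inj P) mx xx my yy).
Qed.

Lemma Vf_eq I x y : x \in Vset P -> y \in Vset P ->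
  is_vint P I -> vset I x -> vset I y -> Vf x = Vf y.
Proof.
move=> /hVf[mx xx] /hVf[my yy].
exact: (maximal_fun_eq (@vint_join P) (@vset_inj P) mx xx my yy).
Qed.

Lemma phi_varm_corners a b : inner_interval P a b ->
  mmul (G a) (G b) = mmul (G (a.1, b.2)) (G (b.1, a.2)).
Proof.
move=> ab; have [aV bV cV dV] := inner_interval_corners ab.
have W := holem_corners hhs ab.
case: a b ab aV bV cV dV W => [a1 a2] [b1 b2] [/= lt1 lt2 inP] aV bV cV dV W.
have eH1 : Hf (a1, a2) = Hf (b1, a2).
  apply: (Hf_eq (I := (a1, b1, a2)) aV dV); rewrite /hset /= ?eqxx //; try lia.
  by split=> /= [|t /= ht]; [lia | rewrite /hedge inP ?orbT //; lia].
have eH2 : Hf (b1, b2) = Hf (a1, b2).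
  apply: (Hf_eq (I := (a1, b1, b2)) bV cV); rewrite /hset /= ?eqxx //; try lia.
  by split=> /= [|t /= ht]; [lia | rewrite /hedge (inP t b2.-1) ?orbT //; lia].
have eV1 : Vf (a1, a2) = Vf (a1, b2).
  apply: (Vf_eq (I := (a1, a2, b2)) aV cV); rewrite /vset /= ?eqxx //; try lia.
  by split=> /= [|t /= ht]; [lia | rewrite /vedge inP ?orbT //; lia].
have eV2 : Vf (b1, b2) = Vf (b1, a2).
  apply: (Vf_eq (I := (b1, a2, b2)) bV dV); rewrite /vset /= ?eqxx //; try lia.
  by split=> /= [|t /= ht]; [lia | rewrite /vedge (inP b1.-1 t) ?orbT //; lia].
apply/eqP/cmP => i; move/(congr1 (fun m : {cmonom tvar} => m i)): W.
by rewrite /phi_varm !cmM /= eH1 eH2 eV1 eV2; lia.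
Qed.

Lemma phi_varm_diagonals a b x y z w :
  inner_interval P a b -> corner_pair a b x y -> corner_pair (a.1, b.2) (b.1, a.2) z w ->
  mmul (G x) (G y) = mmul (G z) (G w).
Proof.
move=> ab xy zw; have E := phi_varm_corners ab.
case: xy zw => -[-> ->] [] [-> ->].
- exact: E.
- by rewrite E [RHS]mulmC.
- by rewrite [LHS]mulmC E.
- by rewrite [LHS]mulmC E [RHS]mulmC.
Qed.

End InnerIntervalImages.

Theorem lemma4p2 (K : fieldType) (P : {fset cell}) (hP : polyomino P)
  (hs : seq {fset cell}) (hhs : hole_list P hs)
  (Hf Vf : nat * nat -> nat * nat * nat)
  (hHf : forall a, a \in Vset P -> is_maxhint P (Hf a) /\ hset (Hf a) a)
  (hVf : forall a, a \in Vset P -> is_maxvint P (Vf a) /\ vset (Vf a) a)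
  (fp fm : {cmonom (Vset P)})
  (hfJ : @inJ K P Hf Vf hs (@binom K _ fp fm))
  (hdeg : (3 <= bdeg fp fm)%N)
  (p q r : Vset P)
  (hp : (0 < fp p)%N) (hq : (0 < fp q)%N) (hr : (0 < fm r)%N)
  (hcorner : exists a b : nat * nat, inner_interval P a b /\
     ( ( (val p = a /\ val q = b \/ val p = b /\ val q = a) /\
         (val r = (a.1, b.2) \/ val r = (b.1, a.2)) )
     \/ ( (val p = (a.1, b.2) /\ val q = (b.1, a.2) \/
           val p = (b.1, a.2) /\ val q = (a.1, b.2)) /\
          (val r = a \/ val r = b) ) )) :
  @redundant K P Hf Vf hs (@binom K _ fp fm) (bdeg fp fm).
Proof.
case: hcorner => a [b [ab corners]].
have [aV bV cV dV] := inner_interval_corners ab.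
have [ab_neq cd_neq] := inner_interval_neq ab.
have val_neq (x y : Vset P) : val x != val y -> x != y by apply: contra_neq => ->.
case: corners => [[pq r_anti] | [pq r_diag]].
- have [s rs] := corner_pair_complete cV dV r_anti.
  apply: (binom_redundant (s := s) _ hp hq hr _ hfJ hdeg).
    exact/val_neq/(corner_pair_neq ab_neq pq).
  exact (phi_varm_diagonals hhs hHf hVf ab pq rs).
- have [s rs] := corner_pair_complete aV bV r_diag.
  apply: (binom_redundant (s := s) _ hp hq hr _ hfJ hdeg).
    exact/val_neq/(corner_pair_neq cd_neq pq).
  exact/esym/(phi_varm_diagonals hhs hHf hVf ab rs pq).
Qed.
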